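(* Let $n$ be a nonnegative integer and let $a,c\in\mathbb{C}$ be such that all hypergeometric series and quotients below are defined (no lower parameter is zero or a negative integer). Then \[ {}_3F_2\!\left(\left.{-2n,a,c \atop \frac{a}{2}-n,\frac{a+1}{2}-n}\right| \frac{1}{4}\right) =\frac{(-1)^n(2n)!\,(c)_n}{n!\,(1-a)_{2n}}\, {}_3F_2\!\left(\left.{-n,1+c-a+n,a-c-n \atop \frac{1}{2},1-c-n}\right| \frac{1}{4}\right) \] and \[ {}_3F_2\!\left(\left.{-2n-1,a,c \atop \frac{a-1}{2}-n,\frac{a}{2}-n}\right| \frac{1}{4}\right) =\frac{(-1)^n(1+c-a+n)(2n+1)!\,(c)_n}{n!\,(1-a)_{2n+1}}\, {}_3F_2\!\left(\left.{-n,2+c-a+n,a-c-n \atop \frac{3}{2},1-c-n}\right| \frac{1}{4}\right). \]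
   Context: For $a\in\mathbb{C}$, $(a)_0=1$ and $(a)_k=a(a+1)\cdots(a+k-1)$ for $k\ge1$. The hypergeometric series is ${}_rF_s\!\left(\left.{\alpha_1,\ldots,\alpha_r\atop \beta_1,\ldots,\beta_s}\right|z\right)=\sum_{k\ge0}\frac{(\alpha_1)_k\cdots(\alpha_r)_k}{k!(\beta_1)_k\cdots(\beta_s)_k}z^k$, with no lower parameter zero or a negative integer; when an upper parameter is $-n$ (or $-2n$, $-2n-1$) it is a finite sum. *)

(* The complex numbers are modelled by an arbitrary
   numClosedFieldType C (e.g. algC, or R[i] for a real closed field R);
   the identity is stated for all such C. *)
From mathcomp Require Import all_boot all_order all_algebra.
Set Implicit Arguments. Unset Strict Implicit. Unset Printing Implicit Defensive.
Import Order.TTheory GRing.Theory Num.Theory.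
Local Open Scope ring_scope.

Definition poch {F : pzRingType} (a : F) (k : nat) : F :=
  \prod_(i < k) (a + i%:R).

Definition not_npint {F : pzRingType} (b : F) : Prop :=
  forall k : nat, b + k%:R != 0.

(* Terminating 3F2 series: the partial sum over k = 0..N.  When one upper
   parameter is -N (N : nat), all terms with k > N vanish, so this is
   exactly the hypergeometric series 3F2. *)
Definition F32 {F : fieldType} (N : nat) (a1 a2 a3 b1 b2 z : F) : F :=
  \sum_(k < N.+1)
    poch a1 k * poch a2 k * poch a3 k /
      ((k`!)%:R * poch b1 k * poch b2 k) * z ^+ k.

From mathcomp Require Import all_boot all_order all_algebra.
From mathcomp Require Import ring zify.
Import Order.TTheory GRing.Theory Num.Theory.
Local Open Scope ring_scope.
Set Implicit Arguments. Unset Strict Implicit. Unset Printing Implicit Defensive.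

(* Write m = 2n or 2n + 1. Both sides equal m!/(a - m)_m times one finite sum of
   generalized binomial coefficients. On the left, the duplication formula
   (x/2)_k ((x+1)/2)_k 4^k = (x)_(2k) turns the k-th term into
   binom(-c, k) binom(a - 1 + k, m - k); on the right, reading the series
   backwards (i = n - j) gives binom(-c, i) binom(a - 1 - c - i, m - 2i).
   These two sums agree because Chu-Vandermonde expands both into the double sum
   of binom(d, k) binom(k, i) binom(A, m - k - i) over i <= k, i + k <= m,
   with d = -c and A = a - 1. *)

Section Factorials.
Variable R : comPzRingType.
Implicit Types x y : R.

Definition ffactr x k : R := \prod_(i < k) (x - i%:R).

Lemma pochS x k : poch x k.+1 = poch x k * (x + k%:R).
Proof. by rewrite /poch big_ord_recr. Qed.

Lemma pochSl x k : poch x k.+1 = x * poch (x + 1) k.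
Proof.
rewrite /poch big_ord_recl addr0; congr (_ * _); apply: eq_bigr => i _.
by rewrite lift0 -add1n natrD addrA.
Qed.

Lemma pochD x p q : poch x (p + q) = poch x p * poch (x + p%:R) q.
Proof.
by rewrite /poch big_split_ord; congr (_ * _); apply: eq_bigr => i _; rewrite natrD addrA.
Qed.

Lemma poch1 k : poch (1 : R) k = k`!%:R.
Proof.
elim: k => [|k IHk]; first by rewrite /poch big_ord0.
by rewrite pochS IHk factS natrM mulrC -natr1 addrC.
Qed.

Lemma poch2 k : poch (2%:R : R) k = k.+1`!%:R.
Proof.
elim: k => [|k IHk]; first by rewrite /poch big_ord0.
by rewrite pochS IHk [k.+2`!]factS natrM mulrC -natrD add2n.
Qed.

Lemma ffactrS x k : ffactr x k.+1 = ffactr x k * (x - k%:R).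
Proof. by rewrite /ffactr big_ord_recr. Qed.

Lemma ffactrSl x k : ffactr x k.+1 = x * ffactr (x - 1) k.
Proof.
rewrite /ffactr big_ord_recl subr0; congr (_ * _); apply: eq_bigr => i _.
by rewrite lift0 -add1n natrD opprD addrA.
Qed.

Lemma ffactrD x p q : ffactr x (p + q) = ffactr x p * ffactr (x - p%:R) q.
Proof.
by rewrite /ffactr big_split_ord; congr (_ * _); apply: eq_bigr => i _; rewrite natrD opprD addrA.
Qed.

Lemma ffactr_nat n k : ffactr (n%:R : R) k = (n ^_ k)%:R.
Proof.
elim: k n => [|k IHk] n; first by rewrite /ffactr big_ord0.
rewrite ffactrSl ffactnS natrM; case: n => [|n]; first by rewrite !mul0r.
by rewrite -natr1 addrK IHk.
Qed.

Lemma ffactr_poch x k : ffactr x k = poch (x - k%:R + 1) k.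
Proof.
elim: k x => [|k IHk] x; first by rewrite /ffactr /poch !big_ord0.
by rewrite ffactrSl IHk pochS mulrC -natr1; congr (poch _ _ * _); ring.
Qed.

Lemma poch_opp x k : poch (- x) k = (-1) ^+ k * ffactr x k.
Proof.
elim: k => [|k IHk]; first by rewrite /poch /ffactr !big_ord0 mulr1.
by rewrite pochS ffactrS IHk exprS; ring.
Qed.

Lemma poch_opp_nat n k : poch (- n%:R : R) k = (-1) ^+ k * (n ^_ k)%:R.
Proof. by rewrite poch_opp ffactr_nat. Qed.

Lemma poch_neq0_leq x p q : poch x q != 0 -> (p <= q)%N -> poch x p != 0.
Proof.
move=> + le_pq; apply: contraNneq => px0.
by rewrite -(subnKC le_pq) pochD px0 mul0r.
Qed.

Lemma poch_1subr x k : poch (1 - x) k = (-1) ^+ k * poch (x - k%:R) k.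
Proof. by rewrite -opprB poch_opp ffactr_poch; congr (_ * poch _ _); ring. Qed.

Lemma poch_subn x n j : (j <= n)%N ->
  poch x n = (-1) ^+ j * poch (1 - x - n%:R) j * poch x (n - j).
Proof.
move=> le_jn; rewrite -{1}(subnK le_jn) pochD mulrC; congr (_ * _).
rewrite (_ : 1 - x - n%:R = 1 - (x + n%:R)); last by ring.
by rewrite poch_1subr signrMK natrB // addrA.
Qed.

Lemma ffactr_split_poch x j k :
  ffactr (x + j%:R - 1) (j + k) = (-1) ^+ k * poch x j * poch (1 - x) k.
Proof.
rewrite ffactrD ffactr_poch.
have -> : x + j%:R - 1 - j%:R + 1 = x by ring.
have -> : x + j%:R - 1 - j%:R = x - 1 by ring.
by rewrite -[ffactr _ k](signrMK k) -poch_opp opprB mulrCA mulrA.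
Qed.

Lemma ffactr_vandermonde x y m :
  ffactr (x + y) m = \sum_(l < m.+1) 'C(m, l)%:R * ffactr x l * ffactr y (m - l).
Proof.
have ffactr0 z : ffactr z 0 = 1 by rewrite /ffactr big_ord0.
elim: m => [|m IHm]; first by rewrite big_ord1 !ffactr0 !mulr1.
have step (l : 'I_m.+1) :
    'C(m, l)%:R * ffactr x l * ffactr y (m - l) * (x + y - m%:R) =
    'C(m, l)%:R * ffactr x l.+1 * ffactr y (m - l)
    + 'C(m, l)%:R * ffactr x l * ffactr y (m.+1 - l).
  have le_lm : (l <= m)%N := ltn_ord l.
  by rewrite subSn // !ffactrS natrB //; ring.
have shift : \sum_(l < m.+1) 'C(m, l)%:R * ffactr x l * ffactr y (m.+1 - l) =
    ffactr y m.+1 + \sum_(l < m.+1) 'C(m, l.+1)%:R * ffactr x l.+1 * ffactr y (m - l).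
  rewrite [in RHS]big_ord_recr /= bin_small // !mul0r addr0 big_ord_recl.
  by rewrite bin0 ffactr0 !mul1r subn0.
rewrite ffactrS IHm mulr_suml (eq_bigr _ (fun l _ => step l)) big_split /= shift.
rewrite [RHS]big_ord_recl bin0 ffactr0 !mul1r subn0 addrCA; congr (_ + _).
rewrite -big_split; apply: eq_bigr => l _.
by rewrite lift0 /= binS natrD subSS; ring.
Qed.

End Factorials.

Section GeneralizedBinomial.
Variable F : numFieldType.
Implicit Types x y : F.

Definition binr x k : F := ffactr x k / k`!%:R.

Lemma natr_fact_neq0 k : k`!%:R != 0 :> F.
Proof. by rewrite pnatr_eq0 -lt0n fact_gt0. Qed.

Lemma natr_bin_neq0 k l : (l <= k)%N -> 'C(k, l)%:R != 0 :> F.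
Proof. by move=> le_lk; rewrite pnatr_eq0 -lt0n bin_gt0. Qed.

Lemma natr_ffact_neq0 n k : (k <= n)%N -> (n ^_ k)%:R != 0 :> F.
Proof. by move=> le_kn; rewrite pnatr_eq0 -lt0n ffact_gt0. Qed.

Lemma binr_nat n k : binr n%:R k = 'C(n, k)%:R.
Proof. by rewrite /binr ffactr_nat -bin_ffact natrM mulfK ?natr_fact_neq0. Qed.

Lemma binr_opp x k : binr (- x) k = (-1) ^+ k * poch x k / k`!%:R.
Proof. by rewrite /binr -[x]opprK poch_opp signrMK opprK. Qed.

Lemma binr_vandermonde x y m :
  binr (x + y) m = \sum_(l < m.+1) binr x l * binr y (m - l).
Proof.
rewrite /binr ffactr_vandermonde mulr_suml; apply: eq_bigr => l _.
have le_lm : (l <= m)%N := ltn_ord l.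
by rewrite -(bin_fact le_lm) !natrM; field; rewrite natr_bin_neq0 // !natr_fact_neq0.
Qed.

Lemma binr_mul_bin x k l : (l <= k)%N ->
  binr x k * 'C(k, l)%:R = binr x l * binr (x - l%:R) (k - l).
Proof.
move=> le_lk; rewrite /binr -{1}(subnKC le_lk) ffactrD -(bin_fact le_lk) !natrM.
by field; rewrite natr_bin_neq0 // !natr_fact_neq0.
Qed.

Lemma not_npint_poch x k : not_npint x -> poch x k != 0.
Proof. by move=> npx; apply/prodf_neq0 => i _; apply: npx. Qed.

Lemma poch_dup x k :
  poch (x / 2%:R) k * poch ((x + 1) / 2%:R) k * 4%:R ^+ k = poch x (2 * k).
Proof.
have nz2 : 2%:R != 0 :> F by rewrite pnatr_eq0.
elim: k => [|k IHk]; first by rewrite /poch !big_ord0 !mulr1.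
rewrite mulnS !pochS -IHk exprS (_ : 4%:R = 2%:R * 2%:R :> F) -?natrM //.
by rewrite -addn1 !natrD natrM; field.
Qed.

Lemma poch_half k : poch (1 / 2%:R) k = (2 * k)`!%:R / (k`!%:R * 4%:R ^+ k) :> F.
Proof.
have dup := poch_dup 1 k.
rewrite -mulr2n divff ?pnatr_eq0 // !poch1 in dup.
by rewrite -dup; field; rewrite natr_fact_neq0 expf_neq0 // pnatr_eq0.
Qed.

Lemma poch_3half k :
  poch (3%:R / 2%:R) k = (2 * k).+1`!%:R / (k`!%:R * 4%:R ^+ k) :> F.
Proof.
have dup := poch_dup 2%:R k.
rewrite divff ?pnatr_eq0 // natr1 poch1 poch2 in dup.
by rewrite -dup; field; rewrite natr_fact_neq0 expf_neq0 // pnatr_eq0.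
Qed.

End GeneralizedBinomial.

Lemma sum_triangle (V : nmodType) m (T : nat -> nat -> V) :
  \sum_(k < m.+1) \sum_(l < (m - k).+1 | (l <= k)%N) T k l
  = \sum_(i < m./2.+1) \sum_(r < (m - i.*2).+1) T (i + r)%N i.
Proof.
have rows (k : 'I_m.+1) : \sum_(l < (m - k).+1 | (l <= k)%N) T k l
    = \sum_(i < m.+1 | (i <= k <= m - i)%N) T k i.
  rewrite (big_ord_widen_cond m.+1 (fun l => l <= k)%N (T k)) ?ltnS ?leq_subr //.
  have lt_km := ltn_ord k.
  by apply: eq_bigl => i; apply/andP/andP => -[]; lia.
have columns (i : 'I_m./2.+1) : \sum_(r < (m - i.*2).+1) T (i + r)%N i
    = \sum_(k < m.+1 | (i <= k <= m - i)%N) T k i.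
  have -> : (m - i.*2).+1 = ((m - i).+1 - i)%N.
    by have := ltn_ord i; rewrite ltnS geq_half_double; lia.
  rewrite -(big_mkord xpredT (fun r => T (i + r)%N i)).
  under eq_bigr do rewrite addnC.
  rewrite -[LHS](big_addn 0 (m - i).+1 i xpredT (fun k => T k i)) add0n big_geq_mkord.
  by rewrite (big_ord_widen_cond m.+1 (fun k => i <= k)%N (fun k => T k i)) ?ltnS ?leq_subr.
rewrite (eq_bigr _ (fun k _ => rows k)) (eq_bigr _ (fun i _ => columns i)).
rewrite (exchange_big_dep (fun i : 'I_m.+1 => i < m./2.+1)%N) /=; last first.
  by move=> k i _ /andP[le_ik le_kmi]; rewrite ltnS geq_half_double; lia.
rewrite (big_ord_widen m.+1 (fun i => \sum_(k < m.+1 | (i <= k <= m - i)%N) T k i)) //.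
by rewrite ltnS leq_half_double; lia.
Qed.

Lemma binr_diag_sum (F : numFieldType) (d A : F) m :
  \sum_(k < m.+1) binr d k * binr (A + k%:R) (m - k)
  = \sum_(i < m./2.+1) binr d i * binr (A + d - i%:R) (m - i.*2).
Proof.
pose T k l := binr d k * 'C(k, l)%:R * binr A (m - k - l).
transitivity (\sum_(k < m.+1) \sum_(l < (m - k).+1 | (l <= k)%N) T k l).
  apply: eq_bigr => k _; rewrite addrC binr_vandermonde mulr_sumr [RHS]big_mkcond.
  apply: eq_bigr => l _; rewrite /T binr_nat mulrA.
  by case: leqP => // lt_kl; rewrite bin_small // mulr0 mul0r.
rewrite sum_triangle; apply: eq_bigr => i _.
rewrite (_ : A + d - i%:R = (d - i%:R) + A); last by ring.
rewrite binr_vandermonde mulr_sumr; apply: eq_bigr => r _.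
by rewrite /T binr_mul_bin ?leq_addr // addKn mulrA; congr (_ * binr A _); lia.
Qed.

Section Hypergeometric.
Variable F : numFieldType.
Implicit Types a c : F.

Lemma F32_quarter N (a1 a2 a3 b1 b2 : F) :
  F32 N a1 a2 a3 b1 b2 (1 / 4%:R) = \sum_(k < N.+1)
    poch a1 k * poch a2 k * poch a3 k / (k`!%:R * (poch b1 k * poch b2 k * 4%:R ^+ k)).
Proof. by apply: eq_bigr => k _; rewrite div1r exprVn !invfM; ring. Qed.

Lemma F32_dup_binr a c m : poch (a - m%:R) (2 * m) != 0 ->
  F32 m (- m%:R) a c ((a - m%:R) / 2%:R) ((a - m%:R + 1) / 2%:R) (1 / 4%:R)
  = m`!%:R / poch (a - m%:R) m *
    \sum_(k < m.+1) binr (- c) k * binr (a - 1 + k%:R) (m - k).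
Proof.
move=> nz_2m; rewrite F32_quarter mulr_sumr; apply: eq_bigr => k _.
have le_km : (k <= m)%N := ltn_ord k.
have nz_2k : poch (a - m%:R) (2 * k) != 0 by apply: (poch_neq0_leq nz_2m); lia.
have nz_m : poch (a - m%:R) m != 0 by apply: (poch_neq0_leq nz_2m); lia.
have tail : ffactr (a - 1 + k%:R) (m - k)
    = poch (a - m%:R) m * poch a k / poch (a - m%:R) (2 * k).
  apply: (canRL (mulfK nz_2k)); rewrite mulrC ffactr_poch.
  have -> : a - 1 + k%:R - (m - k)%:R + 1 = a - m%:R + (2 * k)%:R.
    by rewrite natrB // natrM; ring.
  rewrite -(pochD (a - m%:R) (2 * k) (m - k)) -{3}[a](subrK m%:R a) -pochD.
  by congr poch; lia.
rewrite poch_dup binr_opp /binr tail poch_opp_nat -(ffact_fact le_km) natrM.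
by field; rewrite nz_2k nz_m !natr_fact_neq0.
Qed.

Lemma F32_half_binr a c n : poch (1 - c - n%:R) n != 0 ->
  (-1) ^+ n * poch c n / n`!%:R *
    F32 n (- n%:R) (1 + c - a + n%:R) (a - c - n%:R) (1 / 2%:R) (1 - c - n%:R) (1 / 4%:R)
  = \sum_(i < n.+1) binr (- c) i * binr (a - 1 - c - i%:R) (2 * n - i.*2).
Proof.
move=> nz_n; rewrite F32_quarter mulr_sumr [RHS](reindex_inj rev_ord_inj).
apply: eq_bigr => j _ /=; rewrite subSS.
have le_jn : (j <= n)%N := ltn_ord j.
have nz_j : poch (1 - c - n%:R) j != 0 := poch_neq0_leq nz_n le_jn.
have second_factor : binr (a - 1 - c - (n - j)%:R) (2 * n - (n - j).*2)
    = (-1) ^+ j * poch (a - c - n%:R) j * poch (1 + c - a + n%:R) j / (2 * j)`!%:R.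
  rewrite /binr (_ : (2 * n - (n - j).*2 = j + j)%N); last by lia.
  rewrite (_ : a - 1 - c - (n - j)%:R = (a - c - n%:R) + j%:R - 1); last first.
    by rewrite natrB //; ring.
  rewrite ffactr_split_poch addnn -mul2n; congr (_ * _ * poch _ _ / _); ring.
rewrite second_factor binr_opp (poch_subn c le_jn) poch_opp_nat poch_half.
have sign_n : (-1) ^+ n = (-1) ^+ (n - j) * (-1) ^+ j :> F by rewrite -exprD subnK.
rewrite -(ffact_fact le_jn) natrM sign_n.
(* The sign (-1)^j occurs squared on the left, so [field] needs its value. *)
rewrite -[(-1) ^+ j]signr_odd; case: (odd j); field;
  by rewrite nz_j natr_ffact_neq0 // !natr_fact_neq0 expf_neq0 // pnatr_eq0.
Qed.

Lemma F32_3half_binr a c n : poch (1 - c - n%:R) n != 0 ->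
  (-1) ^+ n.+1 * (1 + c - a + n%:R) * poch c n / n`!%:R *
    F32 n (- n%:R) (2 + c - a + n%:R) (a - c - n%:R) (3%:R / 2%:R) (1 - c - n%:R) (1 / 4%:R)
  = \sum_(i < n.+1) binr (- c) i * binr (a - 1 - c - i%:R) ((2 * n).+1 - i.*2).
Proof.
move=> nz_n; rewrite F32_quarter mulr_sumr [RHS](reindex_inj rev_ord_inj).
apply: eq_bigr => j _ /=; rewrite subSS.
have le_jn : (j <= n)%N := ltn_ord j.
have nz_j : poch (1 - c - n%:R) j != 0 := poch_neq0_leq nz_n le_jn.
have second_factor : binr (a - 1 - c - (n - j)%:R) ((2 * n).+1 - (n - j).*2)
    = (-1) ^+ j.+1 * poch (a - c - n%:R) j
      * ((1 + c - a + n%:R) * poch (2 + c - a + n%:R) j) / (2 * j).+1`!%:R.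
  rewrite /binr (_ : ((2 * n).+1 - (n - j).*2 = j + j.+1)%N); last by lia.
  rewrite (_ : a - 1 - c - (n - j)%:R = (a - c - n%:R) + j%:R - 1); last first.
    by rewrite natrB //; ring.
  rewrite ffactr_split_poch pochSl addnS addnn -mul2n.
  by congr (_ * _ * (_ * poch _ _) / _); ring.
have sign_n : (-1) ^+ n = (-1) ^+ (n - j) * (-1) ^+ j :> F by rewrite -exprD subnK.
rewrite second_factor binr_opp (poch_subn c le_jn) poch_opp_nat poch_3half.
rewrite -(ffact_fact le_jn) natrM !exprS sign_n.
rewrite -[(-1) ^+ j]signr_odd; case: (odd j); field;
  by rewrite nz_j natr_ffact_neq0 // !natr_fact_neq0 expf_neq0 // pnatr_eq0.
Qed.

End Hypergeometric.

Theorem proposition5p2 (C : numClosedFieldType) (n : nat) (a c : C) :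
  ((not_npint (a / 2%:R - n%:R) -> not_npint ((a + 1) / 2%:R - n%:R) ->
    not_npint (1 - c - n%:R) -> poch (1 - a) (2 * n) != 0 ->
    F32 (2 * n) (- (2 * n)%:R) a c (a / 2%:R - n%:R) ((a + 1) / 2%:R - n%:R)
        (1 / 4%:R)
    = (-1) ^+ n * ((2 * n)`!)%:R * poch c n / ((n`!)%:R * poch (1 - a) (2 * n))
      * F32 n (- n%:R) (1 + c - a + n%:R) (a - c - n%:R) (1 / 2%:R)
            (1 - c - n%:R) (1 / 4%:R))
  /\
  (not_npint ((a - 1) / 2%:R - n%:R) -> not_npint (a / 2%:R - n%:R) ->
    not_npint (1 - c - n%:R) -> poch (1 - a) (2 * n).+1 != 0 ->
    F32 (2 * n).+1 (- ((2 * n).+1)%:R) a c ((a - 1) / 2%:R - n%:R)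
        (a / 2%:R - n%:R) (1 / 4%:R)
    = (-1) ^+ n * (1 + c - a + n%:R) * (((2 * n).+1)`!)%:R * poch c n
        / ((n`!)%:R * poch (1 - a) (2 * n).+1)
      * F32 n (- n%:R) (2 + c - a + n%:R) (a - c - n%:R) (3%:R / 2%:R)
            (1 - c - n%:R) (1 / 4%:R)))%R.
Proof.
have nz_dup m : not_npint ((a - m%:R) / 2%:R) ->
    not_npint ((a - m%:R + 1) / 2%:R) -> poch (a - m%:R) (2 * m) != 0.
  move=> np1 np2; rewrite -poch_dup !mulf_neq0 ?not_npint_poch //.
  by rewrite expf_neq0 // pnatr_eq0.
(* The hypotheses on (1 - a)_m follow from the first two. *)
split=> [np1 np2 np3 _ | np1 np2 np3 _].
- have e1 : a / 2%:R - n%:R = (a - (2 * n)%:R) / 2%:R by rewrite natrM; field.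
  have e2 : (a + 1) / 2%:R - n%:R = (a - (2 * n)%:R + 1) / 2%:R by rewrite natrM; field.
  rewrite e1 e2 in np1 np2 *; have nz := nz_dup _ np1 np2.
  rewrite F32_dup_binr //.
  rewrite binr_diag_sum (_ : (2 * n)./2 = n); last by rewrite mul2n doubleK.
  rewrite -F32_half_binr ?not_npint_poch // poch_1subr.
  rewrite (_ : (-1) ^+ (2 * n) = 1 :> C); last by rewrite -signr_odd mul2n odd_double.
  by field; rewrite natr_fact_neq0 (poch_neq0_leq nz) // leq_pmull.
- have e1 : (a - 1) / 2%:R - n%:R = (a - ((2 * n).+1)%:R) / 2%:R.
    by rewrite -[((2 * n).+1)%:R]natr1 natrM; field.
  have e2 : a / 2%:R - n%:R = (a - ((2 * n).+1)%:R + 1) / 2%:R.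
    by rewrite -[((2 * n).+1)%:R]natr1 natrM; field.
  rewrite e1 e2 in np1 np2 *; have nz := nz_dup _ np1 np2.
  rewrite F32_dup_binr //.
  rewrite binr_diag_sum (_ : (2 * n).+1./2 = n); last by rewrite mul2n /= uphalf_double.
  rewrite -F32_3half_binr ?not_npint_poch // poch_1subr exprS.
  rewrite (_ : (-1) ^+ (2 * n).+1 = -1 :> C); last by rewrite -signr_odd /= mul2n odd_double.
  by field; rewrite natr_fact_neq0 (poch_neq0_leq nz) // leq_pmull.
Qed.
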